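(* Let $V$ be a finite vector space over a finite field and let $d$ be an integral metric on $V$. Then $d$ is convex if and only if $d$ is both correction-normal and equal-detection-normal.
   Context: An integral metric on $V$ is a metric $d:V\times V\to\mathbb{N}\cup\{\infty\}$ (non-negative, $d(x,y)=0\iff x=y$, symmetric, triangle inequality). For $v\in V$ and $\rho\in\mathbb{N}$ put $B_\rho(v)=\{x: d(v,x)\le\rho\}$, $S_\rho(v)=\{x:d(v,x)=\rho\}$, and $B_{-1}(v)=\emptyset$. The metric $d$ is (integrally) convex if for all $v_1,v_2\in V$ with $d(v_1,v_2)<\infty$ and all $i\in\{0,1,\dots,d(v_1,v_2)\}$ there exists $x\in V$ with $d(v_1,x)=i$ and $d(x,v_2)=d(v_1,v_2)-i$. For distinct $v_1,v_2$, the correction capability $\tau(v_1,v_2)$ is the largest integer $\tau$ with $B_\tau(v_1)\cap B_\tau(v_2)=\emptyset$; $d$ is correction-normal if $\tau(v_1,v_2)=\lfloor (d(v_1,v_2)-1)/2\rfloor$ for all distinct $v_1,v_2$. The equal-detection threshold $\sigma_{\mathrm{eq}}(v_1,v_2)$ is the unique $s\in\mathbb{N}$ (if it exists) with $B_s(v_1)\cap B_{s-1}(v_2)=B_{s-1}(v_1)\cap B_s(v_2)=\emptyset$ and $S_s(v_1)\cap S_s(v_2)\neq\emptyset$, and $\sigma_{\mathrm{eq}}(v_1,v_2)=0$ if no such $s$ exists; $d$ is equal-detection-normal if $d(v_1,v_2)=2\sigma_{\mathrm{eq}}(v_1,v_2)$ for all $v_1,v_2$ with $\sigma_{\mathrm{eq}}(v_1,v_2)\neq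 0$. *)

From mathcomp Require Import all_boot all_order all_algebra.
Set Implicit Arguments. Unset Strict Implicit. Unset Printing Implicit Defensive.

(* Extended naturals N ∪ {∞} are represented by [option nat], [None] = ∞. *)
Definition xle (a b : option nat) : bool :=
  match b, a with
  | None, _ => true
  | Some _, None => false
  | Some m, Some n => (n <= m)%N
  end.

Definition xadd (a b : option nat) : option nat :=
  match a, b with Some n, Some m => Some (n + m)%N | _, _ => None end.

Section Metric.
Variable V : Type.
Implicit Types (d : V -> V -> option nat) (v x : V).

Definition integral_metric d : Prop :=
  [/\ forall x y, d x y = Some 0%N <-> x = y,
      forall x y, d x y = d y x
    & forall x y z, xle (d x z) (xadd (d x y) (d y z))].

Definition ball d v (rho : nat) (x : V) : Prop :=
  exists n, d v x = Some n /\ (n <= rho)%N.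
(* B_{s-1}(v) for s : nat, with B_{-1}(v) = ∅ *)
Definition ball_pred d v (s : nat) (x : V) : Prop :=
  match s with 0 => False | s'.+1 => ball d v s' x end.
Definition sphere d v (rho : nat) (x : V) : Prop := d v x = Some rho.

Definition convex_metric d : Prop :=
  forall v1 v2 n, d v1 v2 = Some n ->
  forall i, (i <= n)%N ->
  exists x, d v1 x = Some i /\ d x v2 = Some (n - i)%N.

Definition balls_disjoint d v1 v2 (t : nat) : Prop :=
  forall x, ~ (ball d v1 t x /\ ball d v2 t x).

(* [corr_cap_is d v1 v2 t] : the correction capability τ(v1,v2) equals t,
   i.e. t is the largest integer with B_t(v1) ∩ B_t(v2) = ∅;
   t = None (∞) means the balls are disjoint for every radius.
   (For distinct v1, v2, B_0(v1) ∩ B_0(v2) = ∅, so τ ≥ 0 and nat suffices.) *)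
Definition corr_cap_is d v1 v2 (t : option nat) : Prop :=
  match t with
  | None => forall r, balls_disjoint d v1 v2 r
  | Some t => balls_disjoint d v1 v2 t /\ ~ balls_disjoint d v1 v2 t.+1
  end.

(* ⌊(d - 1)/2⌋ on N ∪ {∞} (only used for d >= 1) *)
Definition half_pred (a : option nat) : option nat :=
  match a with None => None | Some n => Some (n.-1./2) end.

Definition correction_normal d : Prop :=
  forall v1 v2, v1 <> v2 -> corr_cap_is d v1 v2 (half_pred (d v1 v2)).

Definition eq_det_cond d v1 v2 (s : nat) : Prop :=
  (forall x, ~ (ball d v1 s x /\ ball_pred d v2 s x)) /\
  (forall x, ~ (ball_pred d v1 s x /\ ball d v2 s x)) /\
  (exists x, sphere d v1 s x /\ sphere d v2 s x).

Definition sigma_eq_is d v1 v2 (s : nat) : Prop :=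
  (exists! s', eq_det_cond d v1 v2 s') /\ eq_det_cond d v1 v2 s \/
  ~ (exists! s', eq_det_cond d v1 v2 s') /\ s = 0%N.

Definition equal_detection_normal d : Prop :=
  forall v1 v2 s, sigma_eq_is d v1 v2 s -> s <> 0%N -> d v1 v2 = Some (2 * s)%N.

End Metric.

From mathcomp Require Import all_boot all_order all_algebra.
From mathcomp Require Import zify.
From Stdlib Require Import Classical.

(* A convex metric has a point at every intermediate distance between v1 and
   v2, so B_r(v1) and B_s(v2) meet as soon as r + s >= d(v1, v2); this gives
   both normality conditions.  Conversely, let n = d(v1, v2) >= 2 and
   t = (n - 1)/2.  Correction-normality yields x with d(v1, x), d(x, v2) <= t + 1.
   Either x lies strictly inside a geodesic from v1 to v2, or n = 2t + 1 and x
   is at distance t + 1 from both; in the latter case, if no point lies strictly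
   inside a geodesic, then t + 1 is the equal-detection threshold, against
   equal-detection-normality since n is odd.  Splitting at an interior point,
   strong induction on n gives convexity. *)

Lemma half_pred_double {n} : 0 < n -> n.-1./2 * 2 < n <= n.-1./2 * 2 + 2.
Proof.
case: n => // m _ /=; have := odd_double_half m; rewrite -muln2.
by case: (odd m) => /=; lia.
Qed.

Section IntegralMetric.
Variables (V : Type) (d : V -> V -> option nat).
Hypothesis d_metric : integral_metric d.

Lemma metricC x y : d x y = d y x.
Proof. by case: d_metric. Qed.

Lemma metric_refl x : d x x = Some 0.
Proof. by case: d_metric => d0 _ _; apply: (proj2 (d0 x x)). Qed.

Lemma metric_eq0 x y : d x y = Some 0 -> x = y.
Proof. by case: d_metric => d0 _ _; apply: (proj1 (d0 x y)). Qed.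

Lemma metric_triangle {x y z a b} :
  d x y = Some a -> d y z = Some b -> exists2 c, d x z = Some c & c <= a + b.
Proof.
case: d_metric => _ _ tri dxy dyz; move: (tri x y z); rewrite dxy dyz /=.
by case: (d x z) => [c|] //= le_c; exists c.
Qed.

Lemma metric_between {x y z n a b} :
  d x z = Some n -> d x y = Some a -> d y z = Some b -> a + b <= n -> a + b = n.
Proof.
move=> dxz dxy dyz le_abn; have [c] := metric_triangle dxy dyz.
by rewrite dxz => -[<-]; lia.
Qed.

Lemma balls_meet_dist {v1 v2 r s x} :
  ball d v1 r x -> ball d v2 s x -> exists2 n, d v1 v2 = Some n & n <= r + s.
Proof.
move=> [a [d1x le_ar]] [b [d2x le_bs]]; rewrite metricC in d2x.
by have [n dv le_n] := metric_triangle d1x d2x; exists n => //; lia.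
Qed.

Lemma convex_balls_meet {v1 v2 n} r s : convex_metric d ->
  d v1 v2 = Some n -> n <= r + s -> exists x, ball d v1 r x /\ ball d v2 s x.
Proof.
move=> convex dv le_nrs.
have [x [d1x dx2]] := convex v1 v2 n dv (n - minn n s) (leq_subr _ _).
exists x; split; first by exists (n - minn n s); split => //; lia.
by exists (n - (n - minn n s)); rewrite metricC; split => //; lia.
Qed.

Lemma convex_correction_normal : convex_metric d -> correction_normal d.
Proof.
move=> convex v1 v2 neq; rewrite /half_pred; case dv: (d v1 v2) => [n|]; last first.
  by move=> r x [/balls_meet_dist m_x /m_x [m]]; rewrite dv.
have n_gt0 : 0 < n by case: n dv => // /metric_eq0.
have := half_pred_double n_gt0; set t := n.-1./2 => bounds; split.
- by move=> x [/balls_meet_dist m_x /m_x [m]]; rewrite dv => -[<-]; lia.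
- move=> disj; have [|x] := convex_balls_meet t.+1 t.+1 convex dv; first by lia.
  exact: disj.
Qed.

Lemma convex_equal_detection_normal : convex_metric d -> equal_detection_normal d.
Proof.
move=> convex v1 v2 s [[_ [disj [_ [x [d1x d2x]]]]]|[_ ->]] // s_gt0.
rewrite /sphere metricC in d2x; have [n dv le_n] := metric_triangle d1x d2x.
suff : ~ n < 2 * s by rewrite dv => ?; congr Some; lia.
case: s s_gt0 {d1x d2x le_n} disj => // s _ disj lt_n.
have [|y meet] := convex_balls_meet s.+1 s convex dv; first by lia.
exact: disj y meet.
Qed.

Lemma eq_det_cond_uniq v1 v2 s s' :
  eq_det_cond d v1 v2 s -> eq_det_cond d v1 v2 s' -> s = s'.
Proof.
wlog le_ss' : s s' / s <= s' => [sym cond cond'|].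
  by case: (leqP s s') => [|/ltnW] le; [|symmetry]; apply: sym.
move=> [_ [_ [x [d1x d2x]]]] [disj _]; apply/eqP; rewrite eqn_leq le_ss' /=.
rewrite leqNgt; apply/negP; case: s' {le_ss'} disj => // s' disj lt_ss'.
by apply: (disj x); split; [exists s|exists s]; split => //; lia.
Qed.

Lemma sigma_eq_isP {v1 v2 s} : eq_det_cond d v1 v2 s -> sigma_eq_is d v1 v2 s.
Proof.
move=> cond; left; split => //.
by exists s; split => // s'; apply: eq_det_cond_uniq.
Qed.

Definition has_interior_point v1 v2 n :=
  exists y a, [/\ d v1 y = Some a, d y v2 = Some (n - a), 0 < a & a < n].

Lemma has_interior_pointI {v1 v2 x n a b} : d v1 v2 = Some n ->
  d v1 x = Some a -> d x v2 = Some b -> a + b <= n -> a < n -> b < n ->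
  has_interior_point v1 v2 n.
Proof.
move=> dv d1x dx2 le_abn lt_an lt_bn.
have sum_ab := metric_between dv d1x dx2 le_abn.
by exists x, a; split => //; [rewrite dx2; congr Some|]; lia.
Qed.

Lemma balls_disjoint_of_no_interior {v1 v2 n r s} :
  d v1 v2 = Some n -> ~ has_interior_point v1 v2 n ->
  r < n -> s < n -> r + s <= n -> forall x, ~ (ball d v1 r x /\ ball d v2 s x).
Proof.
move=> dv no_int lt_rn lt_sn le_rsn x [[a [d1x le_ar]] [b [d2x le_bs]]].
rewrite metricC in d2x; apply: no_int.
by apply: (has_interior_pointI dv d1x d2x); lia.
Qed.

Lemma normal_has_interior_point {v1 v2 n} :
  correction_normal d -> equal_detection_normal d ->
  d v1 v2 = Some n -> 1 < n -> has_interior_point v1 v2 n.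
Proof.
move=> cn edn dv n_gt1.
have neq : v1 <> v2 by move=> eq12; move: dv; rewrite eq12 metric_refl => -[n0]; lia.
have := cn v1 v2 neq; rewrite dv /=; set t := n.-1./2 => -[_ meet].
have [x [[a [d1x le_at]] [b [d2x le_bt]]]] :
    exists x, ball d v1 t.+1 x /\ ball d v2 t.+1 x.
  by apply: NNPP => no_meet; apply: meet => x meet_x; apply: no_meet; exists x.
rewrite metricC in d2x; have := half_pred_double (ltnW n_gt1); rewrite -/t => bounds.
have [le_abn|lt_nab] := leqP (a + b) n.
  by apply: (has_interior_pointI dv d1x d2x); lia.
apply: NNPP => no_int.
have [n_odd [a_eq b_eq]] : n = t * 2 + 1 /\ a = t.+1 /\ b = t.+1 by lia.
have cond : eq_det_cond d v1 v2 t.+1.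
  split; [|split].
  - by move=> y /=; apply: (balls_disjoint_of_no_interior dv no_int); lia.
  - by move=> y /=; apply: (balls_disjoint_of_no_interior dv no_int); lia.
  - by exists x; rewrite /sphere d1x metricC d2x a_eq b_eq.
by have := edn v1 v2 t.+1 (sigma_eq_isP cond) (PeanoNat.Nat.neq_succ_0 t); rewrite dv => -[]; lia.
Qed.

Lemma normal_convex : correction_normal d -> equal_detection_normal d -> convex_metric d.
Proof.
move=> cn edn v1 v2 n; elim/ltn_ind: n v1 v2 => n IH v1 v2 dv i le_in.
have [le_n1|n_gt1] := leqP n 1.
  have [->|i_gt0] := posnP i; first by exists v1; rewrite metric_refl dv subn0.
  have -> : i = n by lia.
  by exists v2; rewrite dv metric_refl subnn.
have [y [a [d1y dy2 a_gt0 lt_an]]] := normal_has_interior_point cn edn dv n_gt1.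
have [le_ia|lt_ai] := leqP i a.
  have [x [d1x dxy]] := IH a lt_an v1 y d1y i le_ia.
  have [c dx2 le_c] := metric_triangle dxy dy2.
  have := metric_between dv d1x dx2.
  by exists x; rewrite dx2; split => //; congr Some; lia.
have lt_n_a : n - a < n by lia.
have le_i_a : i - a <= n - a by lia.
have [x [dyx dx2]] := IH (n - a) lt_n_a y v2 dy2 (i - a) le_i_a.
have [c d1x le_c] := metric_triangle d1y dyx.
have := metric_between dv d1x dx2.
by exists x; rewrite d1x dx2; split; congr Some; lia.
Qed.

End IntegralMetric.

Theorem proposition3p1 (F : finFieldType) (V : finLmodType F)
    (d : V -> V -> option nat) :
  integral_metric d ->
  (convex_metric d <-> correction_normal d /\ equal_detection_normal d).
Proof.
move=> d_metric; split.
- move=> convex; split.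
  + exact: convex_correction_normal.
  + exact: convex_equal_detection_normal.
- by case; apply: normal_convex.
Qed.
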